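(* Let $N \geq 5$ be an odd integer and $\kappa$ a real number. Let $a>0$ and $b$ be real numbers such that the data set $(X_1,\dots,X_N)$ consisting of $X_1 = a$, of $\tfrac{N-1}{2}$ points equal to $b - \tfrac{a}{N-1}$, and of $\tfrac{N-1}{2}$ points equal to $-b - \tfrac{a}{N-1}$ satisfies $\mathbb{E}(X)=0$, $\mathbb{E}(X^2)=1$ and $\mathbb{E}(X^4)=\kappa$. Then $$\mathbb{E}(X^3) = \frac{-3}{N-1}\, a + \frac{N+1}{(N-1)^2}\, a^3 .$$ Furthermore, when $a = a(N,\kappa) = \sqrt{ \frac{N-1}{N+1} + \sqrt{ ( \frac{N-1}{N+1} )^2 - G(N,\kappa)}}$ with $G(N,\kappa) = \frac{N(N-1)^2 - (N-1)^3 \kappa}{(N+1)(N-3)}$ and $\kappa>1$ fixed, one has $\mathbb{E}(X^3) \sim -3 (\kappa - 1)^{1/4} N^{-3/4} + (\kappa - 1)^{3/4} N^{-1/4}$ as $N \to \infty$.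
   Context: For a finite data set $(X_1,\dots,X_N)$ and a function $f$, $\mathbb{E}(f(X))$ denotes the empirical mean $\frac1N\sum_{i=1}^N f(X_i)$. *)

From Stdlib Require Import Reals Lra List.
From Coquelicot Require Import Coquelicot.
Open Scope R_scope.

Definition emp_mean (f : R -> R) (xs : list R) : R :=
  fold_right Rplus 0 (map f xs) / INR (length xs).

Definition dataset (N : nat) (a b : R) : list R :=
  a :: repeat (b - a / (INR N - 1)) ((N - 1) / 2)
    ++ repeat (- b - a / (INR N - 1)) ((N - 1) / 2).

Definition G_fun (N : nat) (kappa : R) : R :=
  (INR N * (INR N - 1) ^ 2 - (INR N - 1) ^ 3 * kappa)
  / ((INR N + 1) * (INR N - 3)).

Definition a_fun (N : nat) (kappa : R) : R :=
  sqrt ((INR N - 1) / (INR N + 1)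
        + sqrt (((INR N - 1) / (INR N + 1)) ^ 2 - G_fun N kappa)).

Definition asym_fun (N : nat) (kappa : R) : R :=
  -3 * Rpower (kappa - 1) (1/4) * Rpower (INR N) (-3/4)
  + Rpower (kappa - 1) (3/4) * Rpower (INR N) (-1/4).

From Stdlib Require Import Reals Lra Lia List.
From Coquelicot Require Import Coquelicot.
Open Scope R_scope.

(* For N = 2m+1 the mean vanishes for every b, the constraint E(X^2) = 1
   determines b^2, and E(X^3) depends on b only through b^2; this gives the
   closed formula in a.  For the asymptotics put y = N^(1/4), t = N^(-1/2)
   and w = a(N,kappa)/y.  Both E(X^3) and the claimed equivalent become
   (a function of w and t) / y, and w is a continuous function of t equal to
   (kappa-1)^(1/4) at t = 0.  Hence the ratio is a function of t, continuous
   at 0 with value 1, evaluated along t = N^(-1/2) -> 0. *)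

Lemma sum_map_app (f : R -> R) (l1 l2 : list R) :
  fold_right Rplus 0 (map f (l1 ++ l2)) =
  fold_right Rplus 0 (map f l1) + fold_right Rplus 0 (map f l2).
Proof. induction l1 as [|x l IH]; simpl; [ring | rewrite IH; ring]. Qed.

Lemma sum_map_repeat (f : R -> R) (x : R) (m : nat) :
  fold_right Rplus 0 (map f (repeat x m)) = INR m * f x.
Proof.
  induction m as [|m IH]; cbn [repeat map fold_right];
    [simpl; ring | rewrite IH, S_INR; ring].
Qed.

Lemma emp_mean_dataset (f : R -> R) (m : nat) (a b : R) :
  emp_mean f (dataset (2 * m + 1) a b) =
  (f a + INR m * (f (b - a / (2 * INR m)) + f (- b - a / (2 * INR m))))
  / (2 * INR m + 1).
Proof.
  unfold emp_mean, dataset.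
  replace ((2 * m + 1 - 1) / 2)%nat with m
    by (replace (2 * m + 1 - 1)%nat with (m * 2)%nat by lia; now rewrite Nat.div_mul).
  replace (INR (2 * m + 1) - 1) with (2 * INR m)
    by (rewrite plus_INR, mult_INR; simpl; ring).
  cbn [map fold_right length].
  rewrite sum_map_app, !sum_map_repeat, length_app, !repeat_length, S_INR, plus_INR.
  f_equal; ring.
Qed.

Definition skewness_formula (n a : R) : R :=
  -3 / (n - 1) * a + (n + 1) / (n - 1) ^ 2 * a ^ 3.

Lemma dataset_third_moment (m : nat) (a b : R) :
  (0 < m)%nat ->
  emp_mean (fun x => x ^ 2) (dataset (2 * m + 1) a b) = 1 ->
  emp_mean (fun x => x ^ 3) (dataset (2 * m + 1) a b)
  = skewness_formula (INR (2 * m + 1)) a.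
Proof.
  intros Hm Hvar.
  assert (Hm0 : 0 < INR m) by (apply lt_0_INR; lia).
  rewrite emp_mean_dataset in Hvar |- *.
  unfold skewness_formula.
  replace (INR (2 * m + 1)) with (2 * INR m + 1)
    by (rewrite plus_INR, mult_INR; simpl; ring).
  set (c := a / (2 * INR m)) in *.
  assert (Hb2 : 2 * INR m * b ^ 2 = 2 * INR m + 1 - a ^ 2 - 2 * INR m * c ^ 2).
  { apply (Rmult_eq_compat_r (2 * INR m + 1)) in Hvar.
    unfold Rdiv in Hvar; rewrite Rmult_assoc, Rinv_l, Rmult_1_r in Hvar by lra.
    lra. }
  replace ((b - c) ^ 3 + (- b - c) ^ 3) with (-6 * b ^ 2 * c - 2 * c ^ 3) by ring.
  replace (INR m * (-6 * b ^ 2 * c - 2 * c ^ 3))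
    with (-3 * c * (2 * INR m * b ^ 2) - 2 * INR m * c ^ 3) by ring.
  rewrite Hb2; unfold c; field; lra.
Qed.

Lemma Rdiv_div_cancel_r (x y z : R) : y <> 0 -> (x / y) / (z / y) = x / z.
Proof.
  intros Hy. unfold Rdiv. rewrite Rinv_mult, Rinv_inv.
  replace (x * / y * (/ z * y)) with (x * / z * (y * / y)) by ring.
  rewrite Rinv_r by exact Hy. ring.
Qed.

Lemma Rpower_quarter_pow (z : R) (n : nat) :
  0 < z -> Rpower z (INR n / 4) = sqrt (sqrt z) ^ n.
Proof.
  intros Hz.
  assert (Hs : 0 < sqrt z) by now apply sqrt_lt_R0.
  replace (INR n / 4) with (/ 2 * (/ 2 * INR n)) by field.
  rewrite <- !Rpower_mult, (Rpower_sqrt z Hz), (Rpower_sqrt _ Hs).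
  apply Rpower_pow, sqrt_lt_R0, Hs.
Qed.

Definition rescaled_skewness (w t : R) : R :=
  w ^ 3 * (1 + t ^ 2) / (1 - t ^ 2) ^ 2 - 3 * w * t / (1 - t ^ 2).

Lemma skewness_formula_rescale (y a : R) :
  1 < y -> skewness_formula (y ^ 4) a = rescaled_skewness (a / y) (/ y ^ 2) / y.
Proof.
  intros Hy.
  assert (Hy2 : 1 < y ^ 2) by nra.
  unfold skewness_formula, rescaled_skewness.
  field; split; nra.
Qed.

Lemma asym_fun_rescale (N : nat) (kappa : R) :
  1 < kappa -> (0 < N)%nat ->
  let y := sqrt (sqrt (INR N)) in let c := sqrt (sqrt (kappa - 1)) in
  asym_fun N kappa = (c ^ 3 - 3 * c * / y ^ 2) / y.
Proof.
  intros Hk HN y c.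
  assert (HN0 : 0 < INR N) by (apply lt_0_INR; lia).
  assert (Hy : 0 < y) by (apply sqrt_lt_R0, sqrt_lt_R0, HN0).
  unfold asym_fun.
  replace (1 / 4) with (INR 1 / 4) by (simpl; field).
  replace (3 / 4) with (INR 3 / 4) by (simpl; field).
  replace (-3 / 4) with (- (INR 3 / 4)) by (simpl; field).
  replace (-1 / 4) with (- (INR 1 / 4)) by (simpl; field).
  rewrite !Rpower_Ropp, !Rpower_quarter_pow by lra.
  fold y c. field; lra.
Qed.

Definition rescaled_discriminant (kappa e : R) : R :=
  ((1 - e) / (1 + e)) ^ 2 * e
  - ((1 - e) ^ 2 - (1 - e) ^ 3 * kappa) / ((1 + e) * (1 - 3 * e)).

Definition scaled_a (kappa t : R) : R :=
  sqrt ((1 - t ^ 2) / (1 + t ^ 2) * t + sqrt (rescaled_discriminant kappa (t ^ 2))).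

Lemma a_fun_rescale (N : nat) (kappa : R) :
  (3 < N)%nat ->
  a_fun N kappa / sqrt (sqrt (INR N)) = scaled_a kappa (/ sqrt (INR N)).
Proof.
  intros HN.
  assert (Hn : 3 < INR N) by (replace 3 with (INR 3) by (simpl; ring); now apply lt_INR).
  assert (Hs : 0 < sqrt (INR N)) by (apply sqrt_lt_R0; lra).
  unfold a_fun, scaled_a, rescaled_discriminant.
  rewrite <- sqrt_div_alt by exact Hs.
  replace ((/ sqrt (INR N)) ^ 2) with (/ INR N)
    by (rewrite pow_inv, <- Rsqr_pow2, Rsqr_sqrt by lra; reflexivity).
  set (q := (INR N - 1) / (INR N + 1)).
  replace ((1 - / INR N) / (1 + / INR N)) with q by (unfold q; field; lra).
  f_equal. unfold Rdiv at 1.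
  rewrite Rmult_plus_distr_r, <- sqrt_inv, (Rmult_comm (sqrt _)),
    <- sqrt_mult_alt by (left; apply Rinv_0_lt_compat; lra).
  f_equal. f_equal. unfold G_fun, q. field; repeat split; lra.
Qed.

Section Limit.

Variable kappa : R.
Hypothesis kappa_gt1 : 1 < kappa.

Let c := sqrt (sqrt (kappa - 1)).

Lemma c_pos : 0 < c.
Proof. apply sqrt_lt_R0, sqrt_lt_R0; lra. Qed.

Definition skewness_ratio (t : R) : R :=
  rescaled_skewness (scaled_a kappa t) t / (c ^ 3 - 3 * c * t).

Lemma rescaled_discriminant_0 : rescaled_discriminant kappa 0 = kappa - 1.
Proof. unfold rescaled_discriminant; field. Qed.

Lemma scaled_a_0 : scaled_a kappa 0 = c.
Proof.
  unfold scaled_a, c. rewrite pow_i, rescaled_discriminant_0 by lia.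
  f_equal; ring.
Qed.

Lemma skewness_ratio_0 : skewness_ratio 0 = 1.
Proof.
  pose proof c_pos.
  unfold skewness_ratio, rescaled_skewness. rewrite scaled_a_0. field; lra.
Qed.

Lemma scaled_a_continuous : continuity_pt (scaled_a kappa) 0.
Proof.
  assert (Hd : continuity_pt (rescaled_discriminant kappa) 0)
    by (unfold rescaled_discriminant; reg; simpl; lra).
  unfold scaled_a. reg; rewrite pow_i by lia.
  - exact Hd.
  - rewrite rescaled_discriminant_0; lra.
  - lra.
  - rewrite Rmult_0_r, Rplus_0_l. apply sqrt_pos.
Qed.

Lemma skewness_ratio_continuous : continuity_pt skewness_ratio 0.
Proof.
  pose proof (pow_lt c 3 c_pos). pose proof scaled_a_continuous.
  unfold skewness_ratio, rescaled_skewness.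
  reg; rewrite ?pow_i by lia; simpl pow; lra.
Qed.

Lemma skewness_ratio_at_inv_sqrt (N : nat) :
  (3 < N)%nat ->
  skewness_formula (INR N) (a_fun N kappa) / asym_fun N kappa
  = skewness_ratio (/ sqrt (INR N)).
Proof.
  intros HN.
  assert (Hn : 3 < INR N) by (replace 3 with (INR 3) by (simpl; ring); now apply lt_INR).
  assert (Hs : 1 < sqrt (INR N)) by (rewrite <- sqrt_1; apply sqrt_lt_1; lra).
  set (y := sqrt (sqrt (INR N))).
  assert (Hy : 1 < y) by (unfold y; rewrite <- sqrt_1; apply sqrt_lt_1; lra).
  assert (Hy2 : y ^ 2 = sqrt (INR N)) by (apply pow2_sqrt; lra).
  assert (Hy4 : y ^ 4 = INR N)
    by (replace 4%nat with (2 * 2)%nat by reflexivity; rewrite pow_mult, Hy2;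
        apply pow2_sqrt; lra).
  rewrite asym_fun_rescale by (lia || lra); fold y c.
  rewrite <- Hy4 at 1.
  rewrite skewness_formula_rescale, a_fun_rescale, Hy2 by (lia || lra).
  apply Rdiv_div_cancel_r; lra.
Qed.

End Limit.

Lemma is_lim_seq_inv_sqrt_odd :
  is_lim_seq (fun k => / sqrt (INR (2 * k + 1))) 0.
Proof.
  assert (Hinv : is_lim_seq (fun k => / INR (2 * k + 1)) 0).
  { apply (is_lim_seq_inv _ p_infty); [|discriminate].
    apply (is_lim_seq_le_p_loc INR); [|exact is_lim_seq_INR].
    exists 0%nat. intros k _. apply le_INR; lia. }
  apply (is_lim_seq_ext (fun k => sqrt (/ INR (2 * k + 1)))).
  { intros k. apply sqrt_inv. }
  rewrite <- sqrt_0.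
  apply is_lim_seq_continuous; [apply continuity_pt_sqrt; lra | exact Hinv].
Qed.

Theorem proposition2 :
  (forall (N : nat) (kappa a b : R),
      (5 <= N)%nat -> Nat.Odd N -> 0 < a ->
      emp_mean (fun x => x) (dataset N a b) = 0 ->
      emp_mean (fun x => x ^ 2) (dataset N a b) = 1 ->
      emp_mean (fun x => x ^ 4) (dataset N a b) = kappa ->
      emp_mean (fun x => x ^ 3) (dataset N a b)
        = -3 / (INR N - 1) * a + (INR N + 1) / (INR N - 1) ^ 2 * a ^ 3)
  /\
  (forall (kappa : R) (b : nat -> R),
      1 < kappa ->
      (exists K : nat, forall N : nat, (K <= N)%nat -> Nat.Odd N ->
         emp_mean (fun x => x) (dataset N (a_fun N kappa) (b N)) = 0 /\
         emp_mean (fun x => x ^ 2) (dataset N (a_fun N kappa) (b N)) = 1 /\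
         emp_mean (fun x => x ^ 4) (dataset N (a_fun N kappa) (b N)) = kappa) ->
      is_lim_seq
        (fun k : nat =>
           emp_mean (fun x => x ^ 3)
             (dataset (2 * k + 1)%nat (a_fun (2 * k + 1)%nat kappa) (b (2 * k + 1)%nat))
           / asym_fun (2 * k + 1)%nat kappa)
        1).
Proof.
  split.
  - intros N kappa a b HN [m ->] _ _ Hvar _.
    apply dataset_third_moment; [lia | exact Hvar].
  - intros kappa b Hk [K HK].
    rewrite <- (skewness_ratio_0 kappa Hk).
    apply (is_lim_seq_ext_loc (fun k => skewness_ratio kappa (/ sqrt (INR (2 * k + 1))))).
    + exists (K + 2)%nat. intros k Hk'.
      assert (Hodd : Nat.Odd (2 * k + 1)) by (exists k; reflexivity).
      destruct (HK (2 * k + 1)%nat ltac:(lia) Hodd) as [_ [Hvar _]].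
      rewrite dataset_third_moment by (lia || exact Hvar).
      symmetry. apply skewness_ratio_at_inv_sqrt; [exact Hk | lia].
    + apply is_lim_seq_continuous;
        [exact (skewness_ratio_continuous kappa Hk) | exact is_lim_seq_inv_sqrt_odd].
Qed.
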